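(* Let $p$ be a prime, $m,e$ positive integers and $b\ge2$ an integer with $b<p^e$. Then $b+1\leq d_b(\mathcal{C}_i)\leq 2b$ for every $1\leq i\leq p^{e-1}$.
   Context: For $0\le i\le p^e$, $\mathcal{C}_i$ denotes the cyclic code $\langle (x-1)^i\rangle\subseteq \mathbb{F}_{p^m}[x]/\langle x^{p^e}-1\rangle$, with polynomials identified with their coefficient vectors in $\mathbb{F}_{p^m}^{p^e}$. For $c\in\mathbb{F}_{p^m}^{n}$, $\pi_b(c)$ is the list of the $n$ cyclically consecutive $b$-tuples $(c_j,\dots,c_{j+b-1})$ (indices mod $n$), $d_b(c,c')=d_H(\pi_b(c),\pi_b(c'))$, and $d_b(\mathcal{C})$ is the minimum of $d_b(c,c')$ over distinct $c,c'\in\mathcal{C}$. *)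

From HB Require Import structures.
From mathcomp Require Import all_boot all_order all_algebra.
Set Implicit Arguments. Unset Strict Implicit. Unset Printing Implicit Defensive.
Import GRing.Theory.
Local Open Scope ring_scope.

Section BSymbol.
Variable F : fieldType.
Variable n : nat.

Definition cyc (c : 'rV[F]_n) (t : nat) : F :=
  if (insub (t %% n)%N : option 'I_n) is Some k then c 0 k else 0.

Definition poly_of_word (c : 'rV[F]_n) : {poly F} := \poly_(j < n) cyc c j.

Definition bsym (b : nat) (c : 'rV[F]_n) (j : 'I_n) : {ffun 'I_b -> F} :=
  [ffun k : 'I_b => cyc c (j + k)%N].

(* membership in C_i = < (x-1)^i > inside F[x]/<x^n - 1>: c is the reduced
   representative of some multiple q (x-1)^i *)
Definition in_code (i : nat) (c : 'rV[F]_n) : Prop :=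
  exists q : {poly F}, poly_of_word c = (q * ('X - 1) ^+ i) %% ('X^n - 1).

Definition bdist (b : nat) (c c' : 'rV[F]_n) : nat :=
  #|[set j : 'I_n | bsym b c j != bsym b c' j]|.
End BSymbol.

From HB Require Import structures.
From mathcomp Require Import all_boot all_order all_algebra all_field.
From mathcomp Require Import zify.
Set Implicit Arguments. Unset Strict Implicit. Unset Printing Implicit Defensive.
Import GRing.Theory.
Local Open Scope ring_scope.

(* Lower bound: every word of C_i with i >= 1 is a multiple of x - 1, so its
   coordinates sum to 0; two distinct codewords therefore differ in at least
   two positions s <> s'.  The b windows of pi_b containing s all differ, and
   one more window differs: the one starting at s + 1 if it reaches s',
   otherwise the one starting at s, which then avoids s'.
   Upper bound: in characteristic p, (x - 1)^(p^(e-1)) = x^(p^(e-1)) - 1 is,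
   as i <= p^(e-1), a word of C_i with two nonzero coordinates; the windows
   meeting them number at most 2b. *)

Lemma modn_lt_double t n : (t < n + n)%N -> (t %% n = if t < n then t else t - n)%N.
Proof.
move=> lt_t; case: ltnP => [/modn_small // | le_nt].
by rewrite -[in LHS](subnK le_nt) modnDr modn_small //; lia.
Qed.

Section Windows.
Variable F : fieldType.
Variables n b : nat.
Hypothesis n_gt0 : (0 < n)%N.
Hypothesis b_lt_n : (b < n)%N.

Definition ord_mod (t : nat) : 'I_n := Ordinal (ltn_pmod t n_gt0).

Lemma ord_mod_ord (j : 'I_n) : ord_mod j = j.
Proof. by apply: val_inj; rewrite /= modn_small. Qed.

Lemma cyc_ord_mod (c : 'rV[F]_n) t : cyc c t = c 0 (ord_mod t).
Proof.
rewrite /cyc; case: insubP => [u _ u_eq | ]; last by rewrite ltn_pmod.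
by congr (c 0 _); apply: val_inj.
Qed.

(* the start positions of the windows of pi_b that contain coordinate x *)
Definition windows_at (x : 'I_n) : {set 'I_n} :=
  [set ord_mod (x + n - k) | k : 'I_b].

Lemma mem_windows_at x j :
  (j \in windows_at x) = [exists k : 'I_b, ord_mod (j + k) == x].
Proof.
have lt_x := ltn_ord x; have lt_j := ltn_ord j.
apply/imsetP/existsP => [[k _ ->] | [k /eqP/(congr1 val) /= jk_x]].
  exists k; apply/eqP/val_inj => /=; have lt_k := ltn_ord k.
  by rewrite modnDml subnK ?modnDr ?modn_small //; lia.
exists k => //; apply: val_inj => /=; have lt_k := ltn_ord k.
rewrite -(modn_small lt_j); apply/eqP; rewrite -(eqn_modDr k) subnK; last lia.
by rewrite modnDr jk_x modn_small.
Qed.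

Lemma card_windows_at x : #|windows_at x| = b.
Proof.
rewrite card_imset ?cardsT ?card_ord // => k1 k2 /(congr1 val) /= eq_k.
apply: val_inj => /=; have lt_k1 := ltn_ord k1; have lt_k2 := ltn_ord k2.
have lt_x := ltn_ord x.
by move: eq_k; rewrite !modn_lt_double; try lia; case: ifP; case: ifP; lia.
Qed.

Definition bsym_diff (c c' : 'rV[F]_n) : {set 'I_n} :=
  [set j | bsym b c j != bsym b c' j].

Lemma bdistE (c c' : 'rV[F]_n) : bdist b c c' = #|bsym_diff c c'|.
Proof. by []. Qed.

Lemma mem_bsym_diff (c c' : 'rV[F]_n) j : (j \in bsym_diff c c') =
  [exists k : 'I_b, c 0 (ord_mod (j + k)) != c' 0 (ord_mod (j + k))].
Proof.
rewrite inE; apply/idP/existsP => [ne_cc' | [k]].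
  apply/existsP; apply: contraNT ne_cc' => /existsPn eq_cc'.
  apply/eqP/ffunP => k; rewrite !ffunE !cyc_ord_mod.
  by apply/eqP; rewrite -[_ == _]negbK eq_cc'.
by apply: contra => /eqP/ffunP/(_ k); rewrite !ffunE !cyc_ord_mod => ->.
Qed.

Lemma windows_at_sub_bsym_diff (c c' : 'rV[F]_n) x :
  c 0 x != c' 0 x -> windows_at x \subset bsym_diff c c'.
Proof.
move=> ne_x; apply/subsetP => j; rewrite mem_windows_at mem_bsym_diff.
by case/existsP=> k /eqP jk_x; apply/existsP; exists k; rewrite jk_x.
Qed.

Lemma bdist_ge_two_diffs (c c' : 'rV[F]_n) (s s' : 'I_n) : (0 < b)%N -> s != s' ->
  c 0 s != c' 0 s -> c 0 s' != c' 0 s' -> (b.+1 <= bdist b c c')%N.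
Proof.
move=> b_gt0 ne_ss' ne_s ne_s'; have lt_s := ltn_ord s.
suff [x [j [ne_x j_diff j_notin]]] : exists x j, [/\ c 0 x != c' 0 x,
    j \in bsym_diff c c' & j \notin windows_at x].
  rewrite bdistE; apply: leq_trans (subset_leq_card (_ : j |: windows_at x \subset _)).
    by rewrite cardsU1 j_notin card_windows_at.
  by rewrite subUset sub1set j_diff windows_at_sub_bsym_diff.
have [/existsP [k /eqP s1k_s'] | no_k] :=
  boolP [exists k : 'I_b, ord_mod (ord_mod (s + 1) + k) == s'].
  exists s, (ord_mod (s + 1)); split=> //.
    by rewrite mem_bsym_diff; apply/existsP; exists k; rewrite s1k_s'.
  rewrite mem_windows_at; apply/existsPn => k'; apply/eqP => /(congr1 val) /=.
  have lt_k' := ltn_ord k'; rewrite modnDml modn_lt_double; last lia.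
  by case: ifP; lia.
exists s', s; split=> //.
  rewrite mem_bsym_diff; apply/existsP; exists (Ordinal b_gt0).
  by rewrite addn0 ord_mod_ord.
rewrite mem_windows_at; apply/existsPn => -[[|k] lt_k] /=.
  by rewrite addn0 ord_mod_ord.
have lt_k1 : (k < b)%N by lia.
apply: contraNN (existsPn no_k (Ordinal lt_k1)) => /eqP <-; apply/eqP/val_inj.
by rewrite /= modnDml addn1 addSnnS.
Qed.

Lemma bdist_le_two_diffs (c c' : 'rV[F]_n) (x y : 'I_n) :
  (forall z, z != x -> z != y -> c 0 z = c' 0 z) -> (bdist b c c' <= 2 * b)%N.
Proof.
move=> eq_off_xy; rewrite bdistE mul2n -addnn -{1}(card_windows_at x) -(card_windows_at y).
apply: leq_trans (leq_card_setU _ _); apply: subset_leq_card.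
apply/subsetP => j; rewrite mem_bsym_diff inE !mem_windows_at.
case/existsP=> k ne_k; apply/orP.
have [<- | ne_x] := eqVneq (ord_mod (j + k)) x; first by left; apply/existsP; exists k.
have [<- | ne_y] := eqVneq (ord_mod (j + k)) y; first by right; apply/existsP; exists k.
by rewrite eq_off_xy ?eqxx in ne_k.
Qed.

End Windows.

Lemma row_two_diffs (R : zmodType) n (c c' : 'rV[R]_n) :
  \sum_j c 0 j = \sum_j c' 0 j -> c != c' ->
  exists s s' : 'I_n, [/\ s != s', c 0 s != c' 0 s & c 0 s' != c' 0 s'].
Proof.
move=> eq_sum ne_cc'.
have [s ne_s] : exists s, c 0 s != c' 0 s.
  apply/existsP; apply: contraNT ne_cc' => /existsPn eq_cc'.
  by apply/eqP/rowP => j; apply/eqP; rewrite -[_ == _]negbK eq_cc'.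
suff [s' /andP [ne_s's ne_s']] : exists s', (s' != s) && (c 0 s' != c' 0 s').
  by exists s, s'; rewrite eq_sym.
apply/existsP; apply: contraNT ne_s => /existsPn eq_off_s.
rewrite -subr_eq0 -(subrr (\sum_j c 0 j)) {2}eq_sum -sumrB eq_sym.
rewrite (bigD1 s) //= big1 ?addr0 // => j ne_js; apply/eqP; rewrite subr_eq0.
by move: (eq_off_s j); rewrite ne_js negbK.
Qed.

Section Words.
Variable F : fieldType.
Variable n : nat.

Lemma horner1_poly_of_word (c : 'rV[F]_n) : (poly_of_word c).[1] = \sum_j c 0 j.
Proof.
rewrite horner_poly; apply: eq_bigr => j _.
rewrite expr1n mulr1 /cyc; case: insubP => [u _ u_j | ]; last by rewrite modn_small ?ltn_ord.
by congr (c 0 _); apply: val_inj; rewrite u_j modn_small.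
Qed.

Lemma in_code_sum_eq0 i (c : 'rV[F]_n) : (0 < i)%N -> in_code i c -> \sum_j c 0 j = 0.
Proof.
move=> i_gt0 [q c_eq]; rewrite -horner1_poly_of_word c_eq; apply/eqP.
have XsubC1 : 'X - 1 = 'X - (1 : F)%:P by rewrite polyC1.
rewrite -/(root _ 1) -dvdp_XsubCl -XsubC1 -dvdp_mod.
  by rewrite dvdp_mull // -(prednK i_gt0) exprS dvdp_mulr.
by rewrite XsubC1 dvdp_XsubCl /root !hornerE expr1n subrr.
Qed.

Lemma in_code0 i : in_code i (0 : 'rV[F]_n).
Proof.
exists 0; rewrite mul0r mod0p; apply/polyP => k; rewrite coef_poly coef0 /cyc.
by case: ifP => // _; case: insub => [u|] //; rewrite mxE.
Qed.

Lemma poly_of_word_row (P : {poly F}) : (size P <= n)%N ->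
  poly_of_word (\row_(j < n) P`_j) = P.
Proof.
move=> size_P; apply/polyP => k; rewrite coef_poly.
case: ltnP => [lt_kn | le_nk]; last by rewrite nth_default // (leq_trans size_P).
by rewrite /cyc modn_small // insubT mxE.
Qed.

End Words.

Lemma XsubC1_expn_pchar (R : comNzRingType) p k : p \in [pchar R] ->
  ('X - 1 : {poly R}) ^+ (p ^ k) = 'X^(p ^ k) - 1.
Proof.
move=> pcharRp; have p_prime := pcharf_prime pcharRp.
have pchar_pk : [pchar {poly R}].-nat (p ^ k)%N.
  by rewrite pnatX (pnatE _ p_prime) pchar_poly pcharRp.
by have := exprDn_pchar ('X - 1) 1 pchar_pk; rewrite subrK expr1n => ->; rewrite addrK.
Qed.

Lemma in_code_Xn_sub1 (F : fieldType) p k i n : p \in [pchar F] ->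
  (i <= p ^ k < n)%N -> in_code i (\row_(j < n) ('X^(p ^ k) - 1 : {poly F})`_j).
Proof.
move=> pcharFp /andP [le_i lt_n].
have size_Xn_sub1 : size ('X^(p ^ k) - 1 : {poly F}) = (p ^ k).+1.
  by rewrite -polyC1 size_XnsubC // expn_gt0 prime_gt0 // (pcharf_prime pcharFp).
exists (('X - 1) ^+ (p ^ k - i)).
rewrite poly_of_word_row ?size_Xn_sub1 // -exprD subnK // XsubC1_expn_pchar //.
by rewrite modp_small // size_Xn_sub1 -polyC1 size_XnsubC //; lia.
Qed.

Theorem proposition2p6 (F : finFieldType) (p m e b i : nat) :
  prime p -> (0 < m)%N -> (0 < e)%N -> #|F| = (p ^ m)%N ->
  (2 <= b)%N -> (b < p ^ e)%N -> (1 <= i <= p ^ e.-1)%N ->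
  (* b + 1 <= d_b(C_i): every pair of distinct codewords is at b-distance >= b+1 *)
  (forall c c' : 'rV[F]_(p ^ e), in_code i c -> in_code i c' -> c != c' ->
     (b.+1 <= bdist b c c')%N) /\
  (* d_b(C_i) <= 2b: some pair of distinct codewords is at b-distance <= 2b *)
  (exists c c' : 'rV[F]_(p ^ e), [/\ in_code i c, in_code i c', c != c' &
     (bdist b c c' <= 2 * b)%N]).
Proof.
move=> p_prime _ e_gt0 card_F b_ge2 lt_b /andP [i_gt0 le_i].
have n_gt0 : (0 < p ^ e)%N by rewrite expn_gt0 prime_gt0.
split=> [c c' code_c code_c' ne_cc' | ].
  have [|s [s' [ne_ss' ne_s ne_s']]] := row_two_diffs _ ne_cc'.
    by rewrite !(in_code_sum_eq0 i_gt0).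
  exact: (bdist_ge_two_diffs n_gt0 lt_b (ltnW b_ge2) ne_ss' ne_s ne_s').
set h := (p ^ e.-1)%N; have h_gt0 : (0 < h)%N by rewrite expn_gt0 prime_gt0.
have lt_h : (h < p ^ e)%N by rewrite ltn_exp2l ?prime_gt1 //; lia.
set w := \row_(j < p ^ e) ('X^h - 1 : {poly F})`_j.
have w_coord z : w 0 z = (z == h :> nat)%:R - (z == 0 :> nat)%:R.
  by rewrite mxE coefB coefXn coef1.
exists w, 0; split.
- by apply: in_code_Xn_sub1 => //; [exact: card_finPcharP card_F p_prime | lia].
- exact: in_code0.
- apply/eqP => /rowP /(_ (Ordinal n_gt0)); rewrite w_coord mxE /= eq_sym.
  by rewrite (gtn_eqF h_gt0) sub0r => /eqP; rewrite oppr_eq0 oner_eq0.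
- apply: (bdist_le_two_diffs n_gt0 lt_b (x := Ordinal n_gt0) (y := Ordinal lt_h)).
  move=> z ne_z0 ne_zh; rewrite w_coord mxE.
  by rewrite -!(inj_eq val_inj) /= in ne_z0 ne_zh; rewrite (negbTE ne_z0) (negbTE ne_zh) subrr.
Qed.
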